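(* For every positive integer $\ell$, there exist integers $p_1,\dots,p_\ell$ with $j\le p_j\le j(j+1)$ for all $1\le j\le\ell$ such that the $\ell\times\ell$ matrix $A(\{p_j\}_{j=1}^\ell)$ with entries $A_{ij}=C_{p_j}(i)$, $i,j\in[\ell]$, is invertible.
   Context: For a positive integer $p$ and $y\ge0$, $C_p(y)=p\,(1-(1-1/p)^y)$. *)

From mathcomp Require Import all_boot all_order all_algebra.
Set Implicit Arguments. Unset Strict Implicit. Unset Printing Implicit Defensive.
Import Order.TTheory GRing.Theory Num.Theory.
Local Open Scope ring_scope.

(* C_p(y) = p (1 - (1 - 1/p)^y), for p a positive integer and y a natural
   number (only integer arguments y = i are needed); values are rational. *)
Definition Cp (p y : nat) : rat := p%:R * (1 - (1 - p%:R^-1) ^+ y).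

(* The l x l matrix A({p_j}) with A_{ij} = C_{p_j}(i), i, j in [l];
   row/column index k : 'I_l stands for k+1. *)
Definition Amat (l : nat) (p : 'I_l -> nat) : 'M[rat]_l :=
  \matrix_(i < l, j < l) Cp (p j) i.+1.

From mathcomp Require Import all_boot all_order all_algebra.
Set Implicit Arguments. Unset Strict Implicit. Unset Printing Implicit Defensive.
Import Order.TTheory GRing.Theory Num.Theory.
Local Open Scope ring_scope.

(* Since C_p(i) = sum_(k < i) (1 - 1/p)^k, the matrix A({p_j}) factors as
   L V, where L is the lower-triangular matrix of ones and V is the Vandermonde
   matrix of the nodes 1 - 1/p_j.  Both are invertible as soon as the p_j are
   distinct, so the choice p_j = j already works. *)

Lemma Cp_geometric (p n : nat) : (0 < p)%N ->
  Cp p n = \sum_(k < n) (1 - p%:R^-1 : rat) ^+ k.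
Proof.
move=> p_gt0; rewrite /Cp.
have p_neq0 : (p%:R : rat) != 0 by rewrite pnatr_eq0 -lt0n.
by rewrite -opprB subrX1 addrAC subrr add0r mulNr opprK mulrA mulrV ?mul1r
   ?unitfE.
Qed.

Definition lower_ones (R : pzSemiRingType) (n : nat) : 'M[R]_n :=
  \matrix_(i, k) ((k <= i)%N)%:R.

Lemma lower_ones_unitmx (R : comUnitRingType) (n : nat) :
  lower_ones R n \in unitmx.
Proof.
rewrite unitmxE det_trig.
  rewrite (eq_bigr (fun=> 1)) ?prodr_const ?expr1n ?unitr1 // => i _.
  by rewrite mxE leqnn.
apply/forallP => i; apply/forallP => k; apply/implyP => lt_ik.
by rewrite mxE leqNgt lt_ik.
Qed.

Lemma Vandermonde_unitmx (F : fieldType) (n : nat) (a : 'rV[F]_n) :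
  injective (a 0) -> Vandermonde n a \in unitmx.
Proof.
move=> a_inj; rewrite unitmxE det_Vandermonde unitfE.
apply/prodf_neq0 => i _; apply/prodf_neq0 => k lt_ik.
rewrite subr_eq0; apply: contraTneq lt_ik => /a_inj->.
by rewrite ltnn.
Qed.

Lemma Amat_factor (l : nat) (p : 'I_l -> nat) : (forall j, 0 < p j)%N ->
  Amat p = lower_ones rat l *m Vandermonde l (\row_j (1 - (p j)%:R^-1)).
Proof.
move=> p_gt0; apply/matrixP => i j; rewrite !mxE Cp_geometric //.
rewrite (big_ord_widen l (fun k => (1 - (p j)%:R^-1 : rat) ^+ k)) //.
rewrite big_mkcond /=; apply: eq_bigr => k _.
by rewrite !mxE ltnS; case: (k <= i)%N; rewrite ?mul1r ?mul0r.
Qed.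

Lemma Amat_unitmx (l : nat) (p : 'I_l -> nat) :
  (forall j, 0 < p j)%N -> injective p -> Amat p \in unitmx.
Proof.
move=> p_gt0 p_inj; rewrite Amat_factor // unitmx_mul lower_ones_unitmx /=.
apply: Vandermonde_unitmx => j k; rewrite !mxE => /addrI /oppr_inj /invr_inj.
by move/eqP; rewrite eqr_nat => /eqP /p_inj.
Qed.

Theorem lemma8 (l : nat) : (0 < l)%N ->
  exists p : 'I_l -> nat,
    (forall j : 'I_l, (j.+1 <= p j <= j.+1 * j.+2)%N) /\
    Amat p \in unitmx.
Proof.
move=> _; exists (fun j : 'I_l => j.+1); split.
  by move=> j; rewrite leqnn leq_pmulr.
by apply: Amat_unitmx => // j k [] /val_inj.
Qed.
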